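(* Let $\lambda\in\mathbb{C}$ and let $u,F,G:\mathbb{Z}^2\to\mathbb{C}$ with $u$ nonvanishing satisfy, for all $(l,m)\in\mathbb{Z}^2$, \[ \overline F=-\Big(\frac1u-\overline u\Big)F+\lambda G,\quad \overline G=F,\quad \widetilde F=-\frac1u F+\lambda G,\quad \widetilde G=F-uG. \] Then $G$ satisfies \[ \big(\widetilde{\overline G}-\lambda G\big)\big(\overline G-\widetilde G\big)+G\,\overline G=0 \] for all $(l,m)\in\mathbb{Z}^2$.
   Context: Shift notation: for $f:\mathbb{Z}^2\to\mathbb{C}$, $f=f_{l,m}$, $\overline f=f_{l+1,m}$, $\widetilde f=f_{l,m+1}$, $\widetilde{\overline f}=f_{l+1,m+1}$. *)

(* complex numbers are Coquelicot's C = R * R (the field ℂ). *)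
From Stdlib Require Import Reals ZArith.
From Coquelicot Require Import Coquelicot.

From Stdlib Require Import Reals ZArith.
From Coquelicot Require Import Coquelicot.

(* The quad equation for G is a direct consequence of the Lax-type system
   for (F, G); only the l-shifts of F and G and the m-shift of G are needed.  Eliminating the shifted values gives
   two factorisations at every lattice point (l, m):
     - along the diagonal, G(l+1,m+1) - lam G = - F / u, because the term
       u(l+1,m) F coming from the l-shift of F cancels against the one coming
       from the m-shift of G at (l+1,m);
     - across the plaquette, G(l+1,m) - G(l,m+1) = u G.
   Their product is therefore - F G, while G(l,m) G(l+1,m) = G F, so the sum
   vanishes. *)

Section LatticeSystem.

Variables (lam : C) (u F G : Z -> Z -> C).

Hypothesis hu : forall l m : Z, u l m <> 0%C.
Hypothesis h1 : forall l m : Z,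
  F (l + 1)%Z m = (- ((/ u l m - u (l + 1)%Z m) * F l m) + lam * G l m)%C.
Hypothesis h2 : forall l m : Z, G (l + 1)%Z m = F l m.
Hypothesis h4 : forall l m : Z, G l (m + 1)%Z = (F l m - u l m * G l m)%C.

Lemma diagonal_shift (l m : Z) :
  (G (l + 1)%Z (m + 1)%Z - lam * G l m)%C = (- (F l m / u l m))%C.
Proof.
  rewrite (h4 (l + 1)%Z m), (h2 l m), (h1 l m).
  field. apply hu.
Qed.

Lemma cross_difference (l m : Z) :
  (G (l + 1)%Z m - G l (m + 1)%Z)%C = (u l m * G l m)%C.
Proof.
  rewrite (h2 l m), (h4 l m). ring.
Qed.

End LatticeSystem.

Theorem mainTheorem3 (lam : C) (u F G : Z -> Z -> C)
  (hu : forall l m : Z, u l m <> 0%C)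
  (h1 : forall l m : Z,
      F (l + 1)%Z m = (- ((/ u l m - u (l + 1)%Z m) * F l m) + lam * G l m)%C)
  (h2 : forall l m : Z, G (l + 1)%Z m = F l m)
  (h3 : forall l m : Z,
      F l (m + 1)%Z = (- (/ u l m) * F l m + lam * G l m)%C)
  (h4 : forall l m : Z, G l (m + 1)%Z = (F l m - u l m * G l m)%C) :
  forall l m : Z,
    ((G (l + 1)%Z (m + 1)%Z - lam * G l m) * (G (l + 1)%Z m - G l (m + 1)%Z)
     + G l m * G (l + 1)%Z m)%C = 0%C.
Proof.
  intros l m.
  rewrite (diagonal_shift lam u F G hu h1 h2 h4 l m).
  rewrite (cross_difference u F G h2 h4 l m).
  rewrite (h2 l m).
  field. apply hu.
Qed.
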